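(* Let $X_n$ be the value $m$ of an index occurrence $\underline m$ chosen uniformly at random among all index occurrences of a uniformly random plain $\lambda$-term of size $n$ (equivalently, the distribution with $\mathbb P(X_n=m)$ equal to the total number of occurrences of $\underline m$ over all plain terms of size $n$ divided by the total number of index occurrences over all plain terms of size $n$). Then for every $m\ge 0$, $\mathbb P(X_n=m)\to(1-\rho)\rho^m$ as $n\to\infty$, i.e. $X_n$ converges to a geometric law with parameter $\rho$.
   Context: Plain $\lambda$-terms in de Bruijn notation are generated by $T::=\underline{n}\mid \lambda T\mid (T\,T)$, with index $\underline n$ encoded as $\mathsf S^n\mathsf 0$. Size: $|\mathsf 0|=1$, $|\mathsf S\,\underline n|=|\underline n|+1$, $|M\,N|=|M|+|N|+1$, $|\lambda M|=|M|+1$. $\rho\approx 0.29559774$ is the positive real root of $z^3+z^2+3z-1$. *)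

From Stdlib Require Import Reals Arith List.
Import ListNotations.

(* T ::= n | lambda T | (T T); the index n stands for S^n 0. *)
Inductive term : Type :=
| Var : nat -> term
| Lam : term -> term
| App : term -> term -> term.

Fixpoint tsize (t : term) : nat :=
  match t with
  | Var n => S n
  | Lam u => S (tsize u)
  | App u v => S (tsize u + tsize v)
  end.

(* gen k n : all terms of size n, provided n <= k (fuel). *)
Fixpoint gen (k n : nat) : list term :=
  match k with
  | 0 => []
  | S k' =>
    match n with
    | 0 => []
    | S n' =>
        [Var n'] ++ map Lam (gen k' n') ++
        flat_map (fun i => flat_map (fun u => map (App u) (gen k' (n' - i)))
                                    (gen k' i))
                 (seq 0 (S n'))
    end
  end.

Definition terms_of_size (n : nat) : list term := gen n n.

Fixpoint occ (m : nat) (t : term) : nat :=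
  match t with
  | Var k => if Nat.eqb k m then 1 else 0
  | Lam u => occ m u
  | App u v => occ m u + occ m v
  end.

Fixpoint nvars (t : term) : nat :=
  match t with
  | Var _ => 1
  | Lam u => nvars u
  | App u v => nvars u + nvars v
  end.

Definition sumnat (f : term -> nat) (l : list term) : nat :=
  fold_right (fun t acc => f t + acc) 0 l.

Definition probX (n m : nat) : R :=
  INR (sumnat (occ m) (terms_of_size n)) / INR (sumnat nvars (terms_of_size n)).

(* Let L(z) count plain terms by size and D = 1 - z - 2 z L.  For a weight f on terms that
   is invariant under abstraction and additive under application, the weighted generating
   function W_f satisfies W_f D = z sum_n f(n) z^n; so the occurrences of the index m have
   generating function z^(m+1)/D and all index occurrences z/((1-z) D).  Writing
   1/D = sum_n d_n z^n, this gives P(X_(n+m+1) = m) = d_n / (d_0 + ... + d_(n+m)).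
   Eliminating L yields D^2 (1-z) = (1-z)^3 - 4 z^2, which vanishes at z = rho.  After the
   rescaling z -> rho z, 1/D becomes H(z) (1-z)^(-1/2) where H^2 = (1 - rho z)/Q(z) for a
   quadratic Q with Q(1) > 0; the coefficients of H decay like (2/3)^n, hence
   rho^n d_n ~ H(1) binom(2n,n)/4^n with H(1) <> 0 and d_n/d_(n+1) -> rho.  This ratio limit
   alone gives d_n/d_(n+m) -> rho^m and d_n/(d_0 + ... + d_n) -> 1 - rho. *)

From Stdlib Require Import Reals Lra Lia List FunctionalExtensionality.
From Coquelicot Require Import Coquelicot.
Import ListNotations.
Open Scope R_scope.

Definition ser := nat -> R.

Definition ser_add (f g : ser) : ser := fun n => f n + g n.
Definition ser_opp (f : ser) : ser := fun n => - f n.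
Definition ser_sub (f g : ser) : ser := fun n => f n - g n.
Definition ser_mul (f g : ser) : ser :=
  fun n => sum_f_R0 (fun k => f k * g (n - k)%nat) n.
Definition serC (c : R) : ser := fun n => match n with O => c | _ => 0 end.
Definition ser0 : ser := serC 0.
Definition ser1 : ser := serC 1.
Definition serX : ser := fun n => match n with 1%nat => 1 | _ => 0 end.
Definition ser_tail (f : ser) : ser := fun n => f (S n).
Definition ser_rescale (r : R) (f : ser) : ser := fun n => r ^ n * f n.

Declare Scope ser_scope.
Delimit Scope ser_scope with S.
Infix "+" := ser_add : ser_scope.
Infix "-" := ser_sub : ser_scope.
Infix "*" := ser_mul : ser_scope.
Notation ser2 := (ser_add ser1 ser1).

Lemma ser_mul_0 f g : ser_mul f g O = f O * g O.
Proof. unfold ser_mul; simpl; ring. Qed.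

Lemma ser_mul_S f g n :
  ser_mul f g (S n) = f O * g (S n) + ser_mul (ser_tail f) g n.
Proof. unfold ser_mul. rewrite decomp_sum by lia. reflexivity. Qed.

Lemma ser_mulDl f g h : ser_mul (ser_add f g) h = ser_add (ser_mul f h) (ser_mul g h).
Proof.
  apply functional_extensionality; intro n; unfold ser_mul, ser_add.
  rewrite <- plus_sum. apply sum_eq; intros; ring.
Qed.

Lemma serC_mul_coef c f n : ser_mul (serC c) f n = c * f n.
Proof.
  destruct n as [|n]; [rewrite ser_mul_0; reflexivity|].
  rewrite ser_mul_S. unfold ser_mul, ser_tail; simpl.
  rewrite (sum_eq _ (fun _ => 0 * 0)) by (intros; ring).
  rewrite <- scal_sum. ring.
Qed.

Lemma ser_mulC f g : ser_mul f g = ser_mul g f.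
Proof.
  apply functional_extensionality; intro n.
  revert f g; induction n as [n IH] using (well_founded_induction Wf_nat.lt_wf).
  intros f g; destruct n as [|[|n]].
  - rewrite !ser_mul_0; ring.
  - rewrite !ser_mul_S, !ser_mul_0; unfold ser_tail; ring.
  - rewrite (ser_mul_S f), (ser_mul_S g), (IH (S n) ltac:(lia) (ser_tail f)),
      (IH (S n) ltac:(lia) (ser_tail g)), (ser_mul_S g), (ser_mul_S f),
      (IH n ltac:(lia) (ser_tail g)).
    unfold ser_tail; ring.
Qed.

Lemma ser_mul_scale_l c f g n :
  ser_mul (fun k => c * f k) g n = c * ser_mul f g n.
Proof. unfold ser_mul. rewrite scal_sum. apply sum_eq; intros; ring. Qed.

Lemma ser_mulA f g h : ser_mul f (ser_mul g h) = ser_mul (ser_mul f g) h.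
Proof.
  apply functional_extensionality; intro n; revert f.
  induction n as [|n IH]; intro f; [rewrite !ser_mul_0; ring|].
  rewrite (ser_mul_S f), (ser_mul_S (ser_mul f g)), (ser_mul_S g), IH.
  assert (Htail : ser_tail (ser_mul f g)
                  = ser_add (fun k => f O * ser_tail g k) (ser_mul (ser_tail f) g)).
  { apply functional_extensionality; intro k; apply ser_mul_S. }
  rewrite Htail, ser_mulDl, ser_mul_0; unfold ser_add.
  rewrite ser_mul_scale_l; ring.
Qed.

Lemma ser_mul1l f : ser_mul ser1 f = f.
Proof. apply functional_extensionality; intro n; unfold ser1; rewrite serC_mul_coef; ring. Qed.

Lemma ser_ring : ring_theory ser0 ser1 ser_add ser_mul ser_sub ser_opp (@eq ser).
Proof.
  constructor; intros;
    try (apply functional_extensionality; intros [|];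
         unfold ser_add, ser_sub, ser_opp, ser0, serC; ring).
  - apply ser_mul1l.
  - apply ser_mulC.
  - apply ser_mulA.
  - apply ser_mulDl.
Qed.

Add Ring ser_ring : ser_ring.

Lemma ser_mulX_0 f : ser_mul serX f O = 0.
Proof. rewrite ser_mul_0; simpl; ring. Qed.

Lemma ser_mulX_S f n : ser_mul serX f (S n) = f n.
Proof.
  rewrite ser_mul_S.
  replace (ser_tail serX) with ser1 by (apply functional_extensionality; intros [|[]]; reflexivity).
  rewrite ser_mul1l; simpl; ring.
Qed.

Lemma ser_mulX_inj f g : ser_mul serX f = ser_mul serX g -> f = g.
Proof.
  intro H; apply functional_extensionality; intro n.
  rewrite <- (ser_mulX_S f n), <- (ser_mulX_S g n), H; reflexivity.
Qed.

Lemma ser_mulX_tail f : f O = 0 -> ser_mul serX (ser_tail f) = f.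
Proof.
  intro H; apply functional_extensionality; intros [|n].
  - rewrite ser_mulX_0, H; reflexivity.
  - rewrite ser_mulX_S; reflexivity.
Qed.

Lemma serC_add a b : serC (a + b) = (serC a + serC b)%S.
Proof. apply functional_extensionality; intros [|]; unfold ser_add; simpl; ring. Qed.

Lemma serC_mul a b : serC (a * b) = (serC a * serC b)%S.
Proof.
  apply functional_extensionality; intro n; rewrite serC_mul_coef; destruct n; simpl; ring.
Qed.

Lemma ser_rescale_add r f g : ser_rescale r (f + g)%S = (ser_rescale r f + ser_rescale r g)%S.
Proof. apply functional_extensionality; intro n; unfold ser_rescale, ser_add; ring. Qed.

Lemma ser_rescale_sub r f g : ser_rescale r (f - g)%S = (ser_rescale r f - ser_rescale r g)%S.
Proof. apply functional_extensionality; intro n; unfold ser_rescale, ser_sub; ring. Qed.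

Lemma ser_rescale_mul r f g : ser_rescale r (f * g)%S = (ser_rescale r f * ser_rescale r g)%S.
Proof.
  apply functional_extensionality; intro n; unfold ser_mul, ser_rescale; rewrite scal_sum.
  apply sum_eq; intros i Hi.
  replace (r ^ n) with (r ^ i * r ^ (n - i)) by (rewrite <- pow_add; f_equal; lia); ring.
Qed.

Lemma ser_rescale1 r : ser_rescale r ser1 = ser1.
Proof. apply functional_extensionality; intros [|]; unfold ser_rescale; simpl; ring. Qed.

Lemma ser_rescaleX r : ser_rescale r serX = (serC r * serX)%S.
Proof.
  apply functional_extensionality; intro n; rewrite serC_mul_coef; unfold ser_rescale.
  destruct n as [|[|]]; simpl; ring.
Qed.
Definition lsum {A} (F : A -> nat) (l : list A) : nat :=
  fold_right (fun x acc => (F x + acc)%nat) 0%nat l.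

Lemma lsum_app {A} (F : A -> nat) l1 l2 : lsum F (l1 ++ l2) = (lsum F l1 + lsum F l2)%nat.
Proof. induction l1; simpl; [|rewrite IHl1]; lia. Qed.

Lemma lsum_map {A B} (F : B -> nat) (G : A -> B) l : lsum F (map G l) = lsum (fun x => F (G x)) l.
Proof. induction l; simpl; congruence. Qed.

Lemma lsum_flat_map {A B} (F : B -> nat) (G : A -> list B) l :
  lsum F (flat_map G l) = lsum (fun x => lsum F (G x)) l.
Proof. induction l; simpl; [|rewrite lsum_app, IHl]; reflexivity. Qed.

Lemma lsum_ext {A} (F G : A -> nat) l : (forall x, F x = G x) -> lsum F l = lsum G l.
Proof. intro H; induction l; simpl; congruence. Qed.

Lemma lsum_add {A} (F G : A -> nat) l :
  lsum (fun x => F x + G x)%nat l = (lsum F l + lsum G l)%nat.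
Proof. induction l; simpl; [|rewrite IHl]; lia. Qed.

Lemma lsum_scale {A} c (F : A -> nat) l : lsum (fun x => c * F x)%nat l = (c * lsum F l)%nat.
Proof. induction l; simpl; [|rewrite IHl]; lia. Qed.

Lemma lsum_const {A} c (l : list A) : lsum (fun _ => c) l = (length l * c)%nat.
Proof. induction l; simpl; [|rewrite IHl]; lia. Qed.

Lemma INR_lsum_seq F n : INR (lsum F (seq 0 (S n))) = sum_f_R0 (fun i => INR (F i)) n.
Proof.
  induction n; [simpl; rewrite Nat.add_0_r; reflexivity|].
  rewrite seq_S, lsum_app, plus_INR, IHn; simpl; rewrite Nat.add_0_r; reflexivity.
Qed.

Lemma flat_map_ext_in {A B} (f g : A -> list B) l :
  (forall x, In x l -> f x = g x) -> flat_map f l = flat_map g l.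
Proof. intro H; rewrite !flat_map_concat_map; f_equal; apply map_ext_in, H. Qed.

Lemma gen_SS k n : gen (S k) (S n) =
  [Var n] ++ map Lam (gen k n) ++
  flat_map (fun i => flat_map (fun u => map (App u) (gen k (n - i))) (gen k i)) (seq 0 (S n)).
Proof. reflexivity. Qed.

Lemma gen_fuel_S k n : (n <= k)%nat -> gen (S k) n = gen k n.
Proof.
  revert n; induction k as [|k IH]; intros [|n] Hn; try reflexivity; [lia|].
  rewrite (gen_SS (S k)), (gen_SS k), IH by lia; do 2 f_equal.
  apply flat_map_ext_in; intros i Hi; apply in_seq in Hi.
  rewrite (IH i) by lia; apply flat_map_ext; intro u; rewrite (IH (n - i)%nat) by lia.
  reflexivity.
Qed.

Lemma gen_fuel k n : (n <= k)%nat -> gen k n = terms_of_size n.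
Proof.
  intro H; replace k with (n + (k - n))%nat by lia; clear H.
  induction (k - n)%nat as [|d IH]; [rewrite Nat.add_0_r; reflexivity|].
  rewrite Nat.add_succ_r, gen_fuel_S by lia; exact IH.
Qed.

Lemma terms_of_size_S n : terms_of_size (S n) =
  [Var n] ++ map Lam (terms_of_size n) ++
  flat_map (fun i => flat_map (fun u => map (App u) (terms_of_size (n - i))) (terms_of_size i))
           (seq 0 (S n)).
Proof.
  unfold terms_of_size at 1; rewrite gen_SS, gen_fuel by lia; do 2 f_equal.
  apply flat_map_ext_in; intros i Hi; apply in_seq in Hi.
  rewrite (gen_fuel n i) by lia; apply flat_map_ext; intro u.
  rewrite (gen_fuel n (n - i)) by lia; reflexivity.
Qed.

Lemma sumnat_terms_of_size_S f n : sumnat f (terms_of_size (S n)) =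
  (f (Var n) + sumnat (fun u => f (Lam u)) (terms_of_size n) +
   lsum (fun i => lsum (fun u => lsum (fun v => f (App u v)) (terms_of_size (n - i)))
                       (terms_of_size i)) (seq 0 (S n)))%nat.
Proof.
  change (sumnat f) with (lsum f); rewrite terms_of_size_S, !lsum_app, lsum_map, lsum_flat_map.
  simpl lsum at 1; rewrite Nat.add_0_r, Nat.add_assoc; f_equal.
  apply lsum_ext; intro i; rewrite lsum_flat_map; apply lsum_ext; intro u; apply lsum_map.
Qed.

Definition count (n : nat) : nat := length (terms_of_size n).
Definition weight (f : term -> nat) (n : nat) : nat := sumnat f (terms_of_size n).

Lemma count_as_sum n : count n = sumnat (fun _ => 1%nat) (terms_of_size n).
Proof. unfold count; induction (terms_of_size n); simpl; congruence. Qed.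

Lemma count_S n : count (S n) =
  (1 + count n + lsum (fun i => count i * count (n - i)) (seq 0 (S n)))%nat.
Proof.
  rewrite (count_as_sum (S n)), (count_as_sum n), sumnat_terms_of_size_S; f_equal.
  apply lsum_ext; intro i.
  rewrite (lsum_ext _ (fun _ => count (n - i))) by (intro; symmetry; apply count_as_sum).
  rewrite lsum_const; reflexivity.
Qed.

Lemma weight_S f n :
  (forall t, f (Lam t) = f t) -> (forall t u, f (App t u) = f t + f u)%nat ->
  weight f (S n) = (f (Var n) + weight f n +
    lsum (fun i => weight f i * count (n - i) + count i * weight f (n - i)) (seq 0 (S n)))%nat.
Proof.
  intros HL HA; unfold weight at 1; rewrite sumnat_terms_of_size_S.
  rewrite (lsum_ext (fun u => f (Lam u)) f) by exact HL; f_equal.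
  apply lsum_ext; intro i.
  rewrite (lsum_ext _ (fun u => count (n - i) * f u + weight f (n - i))%nat).
  - rewrite lsum_add, lsum_scale, lsum_const.
    change (lsum f (terms_of_size i)) with (weight f i).
    change (length (terms_of_size i)) with (count i).
    lia.
  - intro u; rewrite (lsum_ext _ (fun v => f u + f v)%nat) by (intro; apply HA).
    rewrite lsum_add, lsum_const; reflexivity.
Qed.

Definition ser_ones : ser := fun _ => 1.

Fixpoint serXpow (m : nat) : ser :=
  match m with O => ser1 | S m' => (serX * serXpow m')%S end.

Lemma serXpow_coef m n : serXpow m n = if Nat.eqb n m then 1 else 0.
Proof.
  revert n; induction m as [|m IH]; intros [|n]; try reflexivity; simpl serXpow.
  - rewrite ser_mulX_0; reflexivity.
  - rewrite ser_mulX_S, IH; reflexivity.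
Qed.

Lemma serXpow_mul_shift m f k : (serXpow m * f)%S (k + m)%nat = f k.
Proof.
  induction m as [|m IH]; simpl serXpow.
  - rewrite Nat.add_0_r, ser_mul1l; reflexivity.
  - rewrite <- ser_mulA, Nat.add_succ_r, ser_mulX_S; exact IH.
Qed.

Lemma ser_mul_ones_l f n : (ser_ones * f)%S n = sum_f_R0 f n.
Proof. rewrite ser_mulC; unfold ser_mul, ser_ones; apply sum_eq; intros; ring. Qed.

Lemma ser_mulX_ones : (serX * ser_ones = ser_ones - ser1)%S.
Proof.
  apply functional_extensionality; intros [|n]; unfold ser_sub.
  - rewrite ser_mulX_0; unfold ser_ones; simpl; ring.
  - rewrite ser_mulX_S; unfold ser_ones; simpl; ring.
Qed.

Lemma ser_eq_mod_relations (a b c1 x1 y1 c2 x2 y2 : ser) :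
  (a - b = c1 * (x1 - y1) + c2 * (x2 - y2))%S -> x1 = y1 -> x2 = y2 -> a = b.
Proof. intros H <- <-; transitivity (b + (a - b))%S; [ring|]; rewrite H; ring. Qed.

Definition count_ser : ser := fun n => INR (count n).
Definition weight_ser (f : term -> nat) : ser := fun n => INR (weight f n).

(* the denominator of every weighted generating function *)
Definition ser_D : ser := (ser1 - serX - ser2 * (serX * count_ser))%S.

Lemma INR_lsum_convolution (F G : nat -> nat) n :
  INR (lsum (fun i => F i * G (n - i))%nat (seq 0 (S n)))
  = ser_mul (fun k => INR (F k)) (fun k => INR (G k)) n.
Proof. rewrite INR_lsum_seq; apply sum_eq; intros; apply mult_INR. Qed.

Lemma count_ser_eq :
  count_ser = (serX * ser_ones + serX * count_ser + serX * (count_ser * count_ser))%S.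
Proof.
  apply functional_extensionality; intros [|n]; unfold ser_add.
  - rewrite !ser_mulX_0; unfold count_ser; simpl; ring.
  - rewrite !ser_mulX_S; unfold count_ser at 1.
    rewrite count_S, !plus_INR, INR_lsum_convolution; reflexivity.
Qed.

Section AdditiveWeight.

Variable f : term -> nat.
Hypothesis f_Lam : forall t, f (Lam t) = f t.
Hypothesis f_App : forall t u, f (App t u) = (f t + f u)%nat.

Lemma weight_ser_S n : weight_ser f (S n) =
  INR (f (Var n)) + weight_ser f n + 2 * ser_mul count_ser (weight_ser f) n.
Proof.
  unfold weight_ser at 1; rewrite weight_S by assumption.
  rewrite !plus_INR, INR_lsum_seq.
  replace (sum_f_R0 _ n)
    with (ser_mul (weight_ser f) count_ser n + ser_mul count_ser (weight_ser f) n).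
  - rewrite (ser_mulC (weight_ser f)); change (weight_ser f n) with (INR (weight f n)); lra.
  - unfold ser_mul; rewrite <- plus_sum; apply sum_eq; intros.
    rewrite plus_INR, !mult_INR; reflexivity.
Qed.

Lemma weight_ser_mulD : (weight_ser f * ser_D = serX * (fun n => INR (f (Var n))))%S.
Proof.
  transitivity (weight_ser f - serX * weight_ser f
                - serX * (count_ser * weight_ser f) - serX * (count_ser * weight_ser f))%S.
  { unfold ser_D; ring. }
  apply functional_extensionality; intros [|n]; unfold ser_sub.
  - rewrite !ser_mulX_0; unfold weight_ser, weight; simpl; ring.
  - rewrite !ser_mulX_S, weight_ser_S; ring.
Qed.

End AdditiveWeight.

(* [z Dinv(z)] counts occurrences of the index 0; it is the inverse of [D] by [Dinv_mulD]. *)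
Definition Dinv : ser := ser_tail (weight_ser (occ 0)).

Lemma Dinv_mulD : (Dinv * ser_D = ser1)%S.
Proof.
  apply ser_mulX_inj.
  unfold Dinv; rewrite ser_mulA, ser_mulX_tail by reflexivity.
  rewrite weight_ser_mulD by reflexivity.
  f_equal; apply functional_extensionality; intros [|]; reflexivity.
Qed.

Lemma weight_ser_eq f :
  (forall t, f (Lam t) = f t) -> (forall t u, f (App t u) = f t + f u)%nat ->
  weight_ser f = (serX * (fun n => INR (f (Var n))) * Dinv)%S.
Proof.
  intros HL HA; rewrite <- (weight_ser_mulD f HL HA).
  transitivity (weight_ser f * (Dinv * ser_D))%S; [rewrite Dinv_mulD; ring | ring].
Qed.

Lemma weight_occ_coef m n : weight_ser (occ m) (n + S m)%nat = Dinv n.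
Proof.
  rewrite weight_ser_eq by reflexivity.
  replace (fun k => INR (occ m (Var k))) with (serXpow m).
  - rewrite <- ser_mulA, Nat.add_succ_r, ser_mulX_S, serXpow_mul_shift; reflexivity.
  - apply functional_extensionality; intro k; rewrite serXpow_coef; simpl.
    destruct (Nat.eqb k m); reflexivity.
Qed.

Lemma weight_nvars_coef n : weight_ser nvars (S n) = sum_f_R0 Dinv n.
Proof.
  rewrite weight_ser_eq by reflexivity.
  rewrite <- ser_mulA, ser_mulX_S; apply ser_mul_ones_l.
Qed.

Lemma probX_Dinv m n : probX (n + S m)%nat m = Dinv n / sum_f_R0 Dinv (n + m)%nat.
Proof.
  change (probX (n + S m)%nat m)
    with (weight_ser (occ m) (n + S m)%nat / weight_ser nvars (n + S m)%nat).
  rewrite weight_occ_coef, Nat.add_succ_r, weight_nvars_coef; reflexivity.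
Qed.

Lemma Dinv_0 : Dinv O = 1.
Proof.
  unfold Dinv, ser_tail; rewrite weight_ser_S by reflexivity.
  unfold ser_mul, weight_ser, weight; simpl; ring.
Qed.

Lemma Dinv_le_S n : Dinv n <= Dinv (S n).
Proof.
  unfold Dinv, ser_tail at 2; rewrite weight_ser_S by reflexivity.
  assert (0 <= ser_mul count_ser (weight_ser (occ 0)) (S n)).
  { apply cond_pos_sum; intro; apply Rmult_le_pos; apply pos_INR. }
  pose proof (pos_INR (occ 0 (Var (S n)))); unfold ser_tail; lra.
Qed.

Lemma Dinv_pos n : 0 < Dinv n.
Proof.
  induction n as [|n IH]; [rewrite Dinv_0; lra|].
  pose proof (Dinv_le_S n); lra.
Qed.

Definition disc : ser :=
  ((ser1 - serX) * (ser1 - serX) * (ser1 - serX) - (ser2 + ser2) * (serX * serX))%S.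

Lemma ser_D_sq : (ser_D * ser_D * (ser1 - serX) = disc)%S.
Proof.
  refine (ser_eq_mod_relations _ _ (ser0 - (ser2 + ser2) * serX * (ser1 - serX))%S _ _
            ((ser2 + ser2) * (serX * serX))%S _ _ _ count_ser_eq ser_mulX_ones).
  unfold ser_D, disc; ring.
Qed.

Lemma Dinv_sq_disc : (Dinv * Dinv * disc = ser1 - serX)%S.
Proof.
  rewrite <- ser_D_sq.
  transitivity ((Dinv * ser_D) * (Dinv * ser_D) * (ser1 - serX))%S; [ring|].
  rewrite Dinv_mulD; ring.
Qed.

(* the coefficients [binom(2n, n) / 4^n] of [(1 - z)^(-1/2)] *)
Fixpoint invsqrt (n : nat) : R :=
  match n with O => 1 | S k => invsqrt k * (2 * INR k + 1) / (2 * INR k + 2) end.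

(* the coefficients of [z f'(z)] *)
Definition ser_zderiv (f : ser) : ser := fun n => INR n * f n.

Lemma ser_zderiv_sub f g : ser_zderiv (f - g)%S = (ser_zderiv f - ser_zderiv g)%S.
Proof. apply functional_extensionality; intro n; unfold ser_zderiv, ser_sub; ring. Qed.

Lemma ser_zderiv_mul f g :
  ser_zderiv (f * g)%S = (ser_zderiv f * g + f * ser_zderiv g)%S.
Proof.
  apply functional_extensionality; intro n; unfold ser_zderiv, ser_add, ser_mul.
  rewrite scal_sum, <- plus_sum; apply sum_eq; intros i Hi.
  rewrite minus_INR by exact Hi; ring.
Qed.

Lemma ser_zderiv1 : ser_zderiv ser1 = ser0.
Proof. apply functional_extensionality; intros [|]; unfold ser_zderiv, ser0, serC; simpl; ring. Qed.

Lemma ser_zderivX : ser_zderiv serX = serX.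
Proof. apply functional_extensionality; intros [|[|]]; unfold ser_zderiv; simpl; ring. Qed.

Lemma invsqrt_zderiv :
  ((ser1 - serX) * ser_zderiv invsqrt + (ser1 - serX) * ser_zderiv invsqrt = serX * invsqrt)%S.
Proof.
  replace ((ser1 - serX) * ser_zderiv invsqrt)%S
    with (ser_zderiv invsqrt - serX * ser_zderiv invsqrt)%S by ring.
  apply functional_extensionality; intros [|n]; unfold ser_add, ser_sub.
  - rewrite !ser_mulX_0; unfold ser_zderiv; simpl; ring.
  - rewrite !ser_mulX_S; unfold ser_zderiv; cbn [invsqrt]; rewrite S_INR.
    field; pose proof (pos_INR n); lra.
Qed.

Lemma invsqrt_sq : (invsqrt * invsqrt * (ser1 - serX) = ser1)%S.
Proof.
  assert (Hd : ser_zderiv (invsqrt * invsqrt * (ser1 - serX))%S = ser0).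
  { rewrite !ser_zderiv_mul, ser_zderiv_sub, ser_zderiv1, ser_zderivX.
    refine (ser_eq_mod_relations _ _ invsqrt _ _ ser0 ser0 ser0 _ invsqrt_zderiv eq_refl).
    ring. }
  apply functional_extensionality; intros [|n].
  - rewrite !ser_mul_0; unfold ser_sub; simpl; ring.
  - pose proof (equal_f Hd (S n)) as H; unfold ser_zderiv, ser0, serC in H.
    apply Rmult_integral in H as [H|H]; [exfalso; apply (not_0_INR (S n)); auto | exact H].
Qed.

Section Rescaled.

Variable rho : R.
Hypothesis rho_root : rho ^ 3 + rho ^ 2 + 3 * rho - 1 = 0.

Definition Qpoly : ser :=
  (ser1 + serC (rho ^ 2 + rho ^ 3) * serX + serC (rho ^ 3) * (serX * serX))%S.

Lemma disc_rescale : ser_rescale rho disc = ((ser1 - serX) * Qpoly)%S.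
Proof.
  set (c := serC rho).
  assert (Hc : (c * c * c + c * c + (ser1 + ser1 + ser1) * c = ser1)%S).
  { unfold c, ser1; rewrite <- !serC_mul, <- !serC_add, <- serC_mul, <- serC_add; f_equal.
    transitivity (rho ^ 3 + rho ^ 2 + 3 * rho - 1 + 1); [ring | rewrite rho_root; ring]. }
  unfold disc, Qpoly.
  rewrite ser_rescale_sub, !ser_rescale_mul, !ser_rescale_sub, !ser_rescale_add, !ser_rescale1,
    ser_rescaleX.
  replace (rho ^ 2 + rho ^ 3) with (rho * rho + rho * rho * rho) by ring.
  replace (rho ^ 3) with (rho * rho * rho) by ring.
  rewrite serC_add, !serC_mul; fold c.
  refine (ser_eq_mod_relations _ _ (ser0 - serX)%S _ _ ser0 ser0 ser0 _ Hc eq_refl).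
  ring.
Qed.

Definition Hser : ser := (ser_rescale rho Dinv * ((ser1 - serX) * invsqrt))%S.

Lemma Dinv_rescale : ser_rescale rho Dinv = (Hser * invsqrt)%S.
Proof.
  unfold Hser; transitivity (ser_rescale rho Dinv * (invsqrt * invsqrt * (ser1 - serX)))%S.
  - rewrite invsqrt_sq; ring.
  - ring.
Qed.

Lemma Hser_sq_mulQ : (Hser * Hser * Qpoly = ser1 - serC rho * serX)%S.
Proof.
  transitivity (ser_rescale rho (Dinv * Dinv * disc) * (invsqrt * invsqrt * (ser1 - serX)))%S.
  - rewrite !ser_rescale_mul, disc_rescale; unfold Hser; ring.
  - rewrite invsqrt_sq, Dinv_sq_disc, ser_rescale_sub, ser_rescale1, ser_rescaleX; ring.
Qed.

Lemma Hser_0 : Hser O = 1.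
Proof.
  unfold Hser; rewrite !ser_mul_0; unfold ser_rescale, ser_sub; rewrite Dinv_0; simpl; ring.
Qed.

End Rescaled.

Lemma sum_f_R0_le_mono p j N :
  (forall k, 0 <= p k) -> (j <= N)%nat -> sum_f_R0 p j <= sum_f_R0 p N.
Proof.
  intros Hp H; induction N as [|N IH].
  - replace j with O by lia; lra.
  - destruct (Nat.eq_dec j (S N)) as [->|]; [lra|].
    simpl; specialize (Hp (S N)); assert (sum_f_R0 p j <= sum_f_R0 p N) by (apply IH; lia); lra.
Qed.

Lemma sum_f_R0_pos a n : (forall k, 0 < a k) -> 0 < sum_f_R0 a n.
Proof. intro Ha; induction n as [|n IH]; simpl; [|pose proof (Ha (S n))]; auto; lra. Qed.

Lemma sum_ser_mul_le_sq p N :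
  (forall k, 0 <= p k) -> sum_f_R0 (ser_mul p p) N <= (sum_f_R0 p N) ^ 2.
Proof.
  intro Hp; rewrite <- ser_mul_ones_l, ser_mulA.
  unfold ser_mul at 1.
  apply Rle_trans with (sum_f_R0 (fun k => p (N - k)%nat * sum_f_R0 p N) N).
  - apply sum_Rle; intros k Hk.
    rewrite (Rmult_comm (p (N - k)%nat)), ser_mul_ones_l.
    apply Rmult_le_compat_r; [apply Hp | apply sum_f_R0_le_mono; auto].
  - rewrite <- scal_sum; simpl; rewrite Rmult_1_r; right; f_equal.
    rewrite <- (ser_mul_ones_l p N); unfold ser_mul, ser_ones; apply sum_eq; intros; ring.
Qed.

(* A majorant for the coefficients of a square root [h] of [1 + g]: the bounds
   [2 p_(n+1) <= gam_(n+1) + (p * p)_n] come from [g = 2 h' + h'^2] with [h = 1 + h']. *)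
Lemma partial_sums_le1_of_square_majorant (p gam : nat -> R) :
  (forall k, 0 <= p k) -> 2 * p O <= gam O ->
  (forall n, 2 * p (S n) <= gam (S n) + ser_mul p p n) ->
  (forall N, sum_f_R0 gam N <= 1) -> forall N, sum_f_R0 p N <= 1.
Proof.
  intros Hp H0 HS Hg.
  assert (Hk : forall N, 2 * sum_f_R0 p (S N) <= sum_f_R0 gam (S N) + sum_f_R0 (ser_mul p p) N).
  { induction N as [|N IH]; simpl in *; [specialize (HS O); lra | specialize (HS (S N)); lra]. }
  induction N as [|N IH]; [specialize (Hg O); simpl in *; lra|].
  specialize (Hk N); specialize (Hg (S N)); pose proof (sum_ser_mul_le_sq p N Hp).
  pose proof (cond_pos_sum p N Hp).
  assert ((sum_f_R0 p N) ^ 2 <= 1) by (simpl; nra); lra.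
Qed.

Lemma ser_sq_coef_1 h : (h * h)%S 1%nat = 2 * h O * h 1%nat.
Proof. unfold ser_mul; simpl; ring. Qed.

Lemma ser_sq_coef_SS h n :
  (h * h)%S (S (S n)) = 2 * h O * h (S (S n)) + (ser_tail h * ser_tail h)%S n.
Proof.
  rewrite ser_mul_S, ser_mulC, ser_mul_S; unfold ser_tail.
  set (c := ser_mul _ _ n); ring.
Qed.

Lemma sum_majorant_geom_le1 N :
  sum_f_R0 (fun k => (3/2) ^ (S k) * (18/10 * (23/100) ^ (S k))) N <= 1.
Proof.
  rewrite (sum_eq _ (fun k => (69/200) ^ k * (18/10 * (69/200)))).
  - rewrite <- scal_sum, tech3 by lra.
    assert (0 < (69/200) ^ (S N)) by (apply pow_lt; lra).
    apply Rle_trans with (18/10 * (69/200) * (1 / (1 - 69/200))); [|lra].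
    apply Rmult_le_compat_l; [lra|]; unfold Rdiv.
    apply Rmult_le_compat_r; [apply Rlt_le, Rinv_0_lt_compat|]; lra.
  - intros k _; replace (69/200) with (3/2 * (23/100)) by field.
    rewrite Rpow_mult_distr; simpl; ring.
Qed.

Lemma ser_sqrt_coef_bound (h : ser) : h O = 1 ->
  (forall n, Rabs ((h * h)%S n) <= 18/10 * (23/100) ^ n) ->
  forall n, Rabs (h n) <= (2/3) ^ n.
Proof.
  intros Hh0 Hg.
  set (q := fun k => Rabs (h (S k))).
  set (p := fun k => (3/2) ^ (S k) * q k).
  set (gam := fun k => (3/2) ^ (S k) * Rabs ((h * h)%S (S k))).
  assert (Hp : forall k, 0 <= p k)
    by (intro; apply Rmult_le_pos; [apply pow_le; lra | apply Rabs_pos]).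
  assert (HT : forall N, sum_f_R0 p N <= 1).
  { apply (partial_sums_le1_of_square_majorant p gam Hp).
    - unfold p, q, gam; rewrite ser_sq_coef_1, Hh0, Rmult_1_r, Rabs_mult, (Rabs_right 2) by lra.
      lra.
    - intro k.
      assert (Hconv : Rabs ((ser_tail h * ser_tail h)%S k) <= ser_mul q q k).
      { eapply Rle_trans; [apply sum_f_R0_triangle|]; right; apply sum_eq; intros.
        apply Rabs_mult. }
      assert (Hpp : ser_mul p p k = (3/2) ^ (S (S k)) * ser_mul q q k).
      { unfold ser_mul, p; rewrite scal_sum; apply sum_eq; intros i Hi.
        replace ((3/2) ^ (S (S k))) with ((3/2) ^ (S i) * (3/2) ^ (S (k - i)))
          by (rewrite <- pow_add; f_equal; lia); ring. }
      pose proof (Rabs_triang ((h * h)%S (S (S k))) (- (ser_tail h * ser_tail h)%S k)).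
      rewrite Rabs_Ropp in *.
      rewrite Hpp; unfold gam, p; change (q (S k)) with (Rabs (h (S (S k)))).
      rewrite ser_sq_coef_SS, Hh0 in *.
      replace (2 * 1 * h (S (S k)) + (ser_tail h * ser_tail h)%S k
               + - (ser_tail h * ser_tail h)%S k) with (2 * h (S (S k))) in * by ring.
      rewrite Rabs_mult, (Rabs_right 2) in * by lra.
      assert (0 < (3/2) ^ (S (S k))) by (apply pow_lt; lra); nra.
    - intro N; eapply Rle_trans; [|apply (sum_majorant_geom_le1 N)].
      apply sum_Rle; intros k _; apply Rmult_le_compat_l; [apply pow_le; lra | apply Hg]. }
  intros [|n]; [rewrite Hh0, Rabs_R1; simpl; lra|].
  assert (Hpn : p n <= 1).
  { destruct n as [|n]; [specialize (HT O); simpl in HT; lra|].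
    specialize (HT (S n)); simpl in HT; pose proof (cond_pos_sum p n Hp); lra. }
  unfold p, q in Hpn.
  assert (E : (2/3) ^ (S n) * (3/2) ^ (S n) = 1)
    by (rewrite <- Rpow_mult_distr; replace (2/3 * (3/2)) with 1 by field; apply pow1).
  assert (0 < (2/3) ^ (S n)) by (apply pow_lt; lra); nra.
Qed.

Lemma invsqrt_pos n : 0 < invsqrt n.
Proof.
  induction n as [|n IH]; simpl; [lra|]; pose proof (pos_INR n).
  apply Rdiv_lt_0_compat; [apply Rmult_lt_0_compat|]; lra.
Qed.

Lemma invsqrt_le j d : invsqrt (j + d) <= invsqrt j.
Proof.
  induction d as [|d IH]; [rewrite Nat.add_0_r; lra|].
  rewrite Nat.add_succ_r; cbn [invsqrt].
  pose proof (pos_INR (j + d)); pose proof (invsqrt_pos (j + d)).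
  apply Rle_trans with (invsqrt (j + d)); [|exact IH].
  apply Rmult_le_reg_r with (2 * INR (j + d) + 2); [lra|].
  unfold Rdiv; rewrite Rmult_assoc, Rinv_l by lra; nra.
Qed.

Lemma invsqrt_mul_succ_le j d : INR (S j) * invsqrt j <= INR (S (j + d)) * invsqrt (j + d).
Proof.
  induction d as [|d IH]; [rewrite Nat.add_0_r; lra|].
  eapply Rle_trans; [exact IH|]; rewrite Nat.add_succ_r; cbn [invsqrt].
  set (m := (j + d)%nat); rewrite !S_INR.
  pose proof (pos_INR m); pose proof (invsqrt_pos m).
  apply Rmult_le_reg_r with (2 * INR m + 2); [lra|].
  field_simplify; [nra | lra].
Qed.

Lemma invsqrt_sub_le n k : (k <= n)%nat ->
  Rabs (invsqrt (n - k) - invsqrt n) <= invsqrt n * (INR k * INR (S k)) / INR (S n).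
Proof.
  intro Hk.
  pose proof (invsqrt_le (n - k) k) as H1; pose proof (invsqrt_mul_succ_le (n - k) k) as H2.
  replace (n - k + k)%nat with n in H1, H2 by lia.
  pose proof (invsqrt_pos n); pose proof (invsqrt_pos (n - k)).
  rewrite Rabs_right by lra.
  assert (Hnat : (S n <= S k * S (n - k))%nat) by nia.
  apply le_INR in Hnat; rewrite mult_INR in Hnat.
  rewrite !S_INR, minus_INR in * by lia.
  pose proof (pos_INR k); assert (INR k <= INR n) by (apply le_INR; lia).
  apply Rmult_le_reg_r with (INR n + 1); [lra|].
  unfold Rdiv; rewrite Rmult_assoc, (Rmult_assoc (invsqrt n)), Rinv_l by lra; nra.
Qed.

Lemma sum_quadratic_geom_le n : sum_f_R0 (fun k => INR k * INR (S k) * (2/3) ^ k) n <= 36.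
Proof.
  (* the sum plus [(3 (n+1)^2 + 15 (n+1) + 36) (2/3)^(n+1)] is constantly 36 *)
  assert (Htele : sum_f_R0 (fun k => INR k * INR (S k) * (2/3) ^ k) n
                  + (3 * INR (S n) ^ 2 + 15 * INR (S n) + 36) * (2/3) ^ (S n) = 36).
  { induction n as [|n IH]; [simpl; field|].
    assert (Hstep : INR (S n) * INR (S (S n)) * (2/3) ^ (S n)
                    + (3 * INR (S (S n)) ^ 2 + 15 * INR (S (S n)) + 36) * (2/3) ^ (S (S n))
                    = (3 * INR (S n) ^ 2 + 15 * INR (S n) + 36) * (2/3) ^ (S n))
      by (rewrite (S_INR (S n)); cbn [pow]; field).
    cbn [sum_f_R0]; lra. }
  pose proof (pos_INR (S n)); assert (0 < (2/3) ^ (S n)) by (apply pow_lt; lra); nra.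
Qed.

Lemma ser_mul_invsqrt_approx (h : ser) :
  (forall k, Rabs (h k) <= (2/3) ^ k) ->
  forall n, Rabs ((h * invsqrt)%S n / invsqrt n - sum_f_R0 h n) <= 36 / INR (S n).
Proof.
  intros Hh n; pose proof (invsqrt_pos n) as Hb.
  assert (Hn : 0 < INR (S n)) by (apply lt_0_INR; lia).
  assert (E : (h * invsqrt)%S n / invsqrt n - sum_f_R0 h n
              = sum_f_R0 (fun k => h k * (invsqrt (n - k) - invsqrt n)) n / invsqrt n).
  { symmetry; rewrite (sum_eq _ (fun k => h k * invsqrt (n - k) - h k * invsqrt n))
      by (intros; ring).
    rewrite minus_sum, <- scal_sum; unfold ser_mul; field; lra. }
  rewrite E; unfold Rdiv; rewrite Rabs_mult, (Rabs_right (/ invsqrt n))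
    by (apply Rle_ge, Rlt_le, Rinv_0_lt_compat; lra).
  apply Rmult_le_reg_r with (invsqrt n); [lra|]; rewrite Rmult_assoc, Rinv_l, Rmult_1_r by lra.
  eapply Rle_trans; [apply sum_f_R0_triangle|].
  apply Rle_trans with
    (sum_f_R0 (fun k => INR k * INR (S k) * (2/3) ^ k * (invsqrt n / INR (S n))) n).
  - apply sum_Rle; intros k Hk; rewrite Rabs_mult.
    apply Rle_trans with ((2/3) ^ k * (invsqrt n * (INR k * INR (S k)) / INR (S n))).
    + apply Rmult_le_compat; auto using Rabs_pos, invsqrt_sub_le.
    + right; field; lra.
  - rewrite <- scal_sum; pose proof (sum_quadratic_geom_le n).
    assert (0 <= invsqrt n / INR (S n)) by (apply Rlt_le, Rdiv_lt_0_compat; lra).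
    apply Rle_trans with (invsqrt n / INR (S n) * 36); [apply Rmult_le_compat_l; auto|].
    right; field; lra.
Qed.

Lemma is_lim_seq_inv_succ (c : R) : is_lim_seq (fun n => c / INR (S n)) 0.
Proof.
  assert (H : is_lim_seq (fun n => INR (S n)) p_infty)
    by (apply (is_lim_seq_incr_1 INR), is_lim_seq_INR).
  apply is_lim_seq_inv in H; [|discriminate].
  apply (is_lim_seq_scal_l _ c) in H; simpl in H; rewrite Rmult_0_r in H; exact H.
Qed.

Lemma is_lim_seq_geom_dominated_sum (h : ser) :
  (forall k, Rabs (h k) <= (2/3) ^ k) ->
  ex_series (fun k => Rabs (h k)) /\ is_lim_seq (fun n => sum_f_R0 h n) (Series h).
Proof.
  intro Hh.
  assert (Habs : ex_series (fun k => Rabs (h k))).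
  { apply (@ex_series_le R_AbsRing R_CompleteNormedModule _ (fun k => (2/3) ^ k)).
    - intro k; change (norm (Rabs (h k))) with (Rabs (Rabs (h k))); rewrite Rabs_Rabsolu; auto.
    - apply ex_series_geom; rewrite Rabs_right; lra. }
  split; [exact Habs|].
  apply (is_lim_seq_ext (sum_n h)); [intro; apply sum_n_Reals|].
  apply Series_correct, ex_series_Rabs, Habs.
Qed.

Lemma is_lim_seq_ser_mul_invsqrt (h : ser) :
  (forall k, Rabs (h k) <= (2/3) ^ k) ->
  is_lim_seq (fun n => (h * invsqrt)%S n / invsqrt n) (Series h).
Proof.
  intro Hh; destruct (is_lim_seq_geom_dominated_sum h Hh) as [_ Hs].
  apply (is_lim_seq_le_le (fun n => sum_f_R0 h n - 36 / INR (S n)) _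
                          (fun n => sum_f_R0 h n + 36 / INR (S n))).
  - intro n; pose proof (ser_mul_invsqrt_approx h Hh n) as H; apply Rabs_le_between in H; lra.
  - replace (Finite (Series h)) with (Finite (Series h - 0)) by (f_equal; ring).
    apply is_lim_seq_minus'; [exact Hs | apply is_lim_seq_inv_succ].
  - replace (Finite (Series h)) with (Finite (Series h + 0)) by (f_equal; ring).
    apply is_lim_seq_plus'; [exact Hs | apply is_lim_seq_inv_succ].
Qed.

Lemma is_lim_seq_invsqrt_ratio : is_lim_seq (fun n => invsqrt n / invsqrt (S n)) 1.
Proof.
  apply (is_lim_seq_le_le (fun _ => 1) _ (fun n => 1 + 1 / INR (S n))).
  - intro n; pose proof (invsqrt_pos n); pose proof (pos_INR n).
    replace (invsqrt n / invsqrt (S n)) with (1 + 1 / (2 * INR n + 1))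
      by (cbn [invsqrt]; field; split; lra).
    assert (0 < 1 / (2 * INR n + 1)) by (apply Rdiv_lt_0_compat; lra).
    split; [lra|]; apply Rplus_le_compat_l; rewrite S_INR; unfold Rdiv; rewrite !Rmult_1_l.
    apply Rinv_le_contravar; lra.
  - apply is_lim_seq_const.
  - replace (Finite 1) with (Finite (1 + 0)) by (f_equal; ring).
    apply is_lim_seq_plus'; [apply is_lim_seq_const | apply is_lim_seq_inv_succ].
Qed.

Lemma Un_cv_affine_recursion (r y : nat -> R) (rho : R) : 0 <= rho < 1 ->
  Un_cv r rho -> (forall N, y (S N) = 1 + r N * y N) -> Un_cv y (/ (1 - rho)).
Proof.
  intros Hr Hcv Hy eps Heps.
  set (l := / (1 - rho)); assert (Hl : 0 < l) by (apply Rinv_0_lt_compat; lra).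
  assert (Hl1 : l * (1 - rho) = 1) by (unfold l; field; lra).
  (* eventually [|y (N+1) - l| <= q |y N - l| + eps (1 - q) / 2] with [q < 1] *)
  set (q := (1 + rho) / 2).
  set (d := Rmin ((1 - rho) / 2) (eps * (1 - q) / (2 * l))).
  assert (Hd : 0 < d).
  { unfold d, q; apply Rmin_pos; [lra|]; apply Rdiv_lt_0_compat; [|lra].
    apply Rmult_lt_0_compat; lra. }
  destruct (Hcv d Hd) as [N0 HN0].
  assert (step : forall N, (N >= N0)%nat ->
            Rabs (y (S N) - l) <= q * Rabs (y N - l) + eps * (1 - q) / 2).
  { intros N HN; specialize (HN0 N HN); unfold R_dist in HN0.
    replace (y (S N) - l) with (r N * (y N - l) + (r N - rho) * l)
      by (rewrite Hy, <- Hl1 at 1; ring).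
    eapply Rle_trans; [apply Rabs_triang|]; rewrite !Rabs_mult, (Rabs_right l) by lra.
    assert (d <= (1 - rho) / 2) by apply Rmin_l.
    assert (d <= eps * (1 - q) / (2 * l)) by apply Rmin_r.
    assert (Rabs (r N) <= q) by (unfold q; apply Rabs_def2 in HN0 as [? ?]; apply Rabs_le; lra).
    assert (Rabs (r N - rho) * l <= eps * (1 - q) / 2).
    { apply Rle_trans with (eps * (1 - q) / (2 * l) * l); [apply Rmult_le_compat_r; lra|].
      right; field; lra. }
    pose proof (Rabs_pos (y N - l)); pose proof (Rabs_pos (r N)); nra. }
  assert (iter : forall k, Rabs (y (N0 + k)%nat - l) <= q ^ k * Rabs (y N0 - l) + eps / 2).
  { induction k as [|k IH]; [rewrite Nat.add_0_r; simpl; pose proof (Rabs_pos (y N0 - l)); lra|].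
    rewrite Nat.add_succ_r; eapply Rle_trans; [apply step; lia|]; simpl pow.
    assert (0 < q) by (unfold q; lra); assert (1 - q > 0) by (unfold q; lra); nra. }
  set (z := Rabs (y N0 - l)); assert (Hz : 0 <= z) by apply Rabs_pos.
  assert (Hq : Rabs q < 1) by (unfold q; rewrite Rabs_right; lra).
  destruct (pow_lt_1_zero q Hq (eps / 2 / (z + 1))) as [K HK];
    [apply Rdiv_lt_0_compat; lra|].
  exists (N0 + K)%nat; intros n Hn; unfold R_dist.
  replace n with (N0 + (n - N0))%nat by lia.
  eapply Rle_lt_trans; [apply iter|]; fold z.
  specialize (HK (n - N0)%nat ltac:(lia)).
  assert (0 <= q ^ (n - N0)) by (apply pow_le; unfold q; lra).
  rewrite Rabs_right in HK by lra.
  assert (q ^ (n - N0) * (z + 1) < eps / 2).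
  { apply Rmult_lt_reg_r with (/ (z + 1)); [apply Rinv_0_lt_compat; lra|].
    rewrite Rmult_assoc, Rinv_r, Rmult_1_r by lra; exact HK. }
  nra.
Qed.

Section RatioLimit.

Variables (a : nat -> R) (r : R).
Hypothesis a_pos : forall n, 0 < a n.
Hypothesis a_ratio : is_lim_seq (fun n => a n / a (S n)) r.

Lemma is_lim_seq_ratio_pow m : is_lim_seq (fun n => a n / a (n + m)%nat) (r ^ m).
Proof.
  induction m as [|m IH].
  - apply (is_lim_seq_ext (fun _ => 1)); [|apply is_lim_seq_const].
    intro n; rewrite Nat.add_0_r; pose proof (a_pos n); field; lra.
  - assert (Hr : is_lim_seq (fun n => a (n + m)%nat / a (S (n + m))) r)
      by (apply (is_lim_seq_incr_n (fun n => a n / a (S n)) m); exact a_ratio).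
    pose proof (is_lim_seq_mult' _ _ _ _ IH Hr) as L.
    eapply is_lim_seq_ext; [|simpl; rewrite Rmult_comm; exact L].
    intro n; rewrite Nat.add_succ_r.
    pose proof (a_pos (n + m)); pose proof (a_pos (S (n + m))); field; lra.
Qed.

Lemma is_lim_seq_ratio_partial_sum : 0 <= r < 1 ->
  is_lim_seq (fun n => a n / sum_f_R0 a n) (1 - r).
Proof.
  intro Hr.
  assert (Hy : Un_cv (fun n => sum_f_R0 a n / a n) (/ (1 - r))).
  { apply (Un_cv_affine_recursion (fun n => a n / a (S n))); [exact Hr | |].
    - apply is_lim_seq_Reals, a_ratio.
    - intro N; simpl; pose proof (a_pos N); pose proof (a_pos (S N)); field; lra. }
  apply is_lim_seq_Reals in Hy.
  pose proof (is_lim_seq_div' _ _ _ _ (is_lim_seq_const 1) Hy) as L.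
  replace (1 / / (1 - r)) with (1 - r) in L by (field; lra).
  eapply is_lim_seq_ext; [|apply L; apply Rinv_neq_0_compat; lra].
  intro n; pose proof (a_pos n); pose proof (sum_f_R0_pos a n a_pos); simpl; field; lra.
Qed.

End RatioLimit.

Section Singularity.

Variable rho : R.
Hypothesis rho_pos : 0 < rho.
Hypothesis rho_root : rho ^ 3 + rho ^ 2 + 3 * rho - 1 = 0.

Lemma rho_bounds : 2955/10000 < rho < 2957/10000.
Proof.
  split; [destruct (Rlt_or_le (2955/10000) rho) as [|H]
         | destruct (Rlt_or_le rho (2957/10000)) as [|H]]; auto; exfalso.
  - assert (rho ^ 3 <= (2955/10000) ^ 3) by (apply pow_incr; lra).
    assert (rho ^ 2 <= (2955/10000) ^ 2) by (apply pow_incr; lra); lra.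
  - assert ((2957/10000) ^ 3 <= rho ^ 3) by (apply pow_incr; lra).
    assert ((2957/10000) ^ 2 <= rho ^ 2) by (apply pow_incr; lra); lra.
Qed.

Definition Gser : ser := (Hser rho * Hser rho)%S.

Lemma Gser_coefs : Gser O = 1 /\ Gser 1%nat + (rho ^ 2 + rho ^ 3) = - rho /\
  forall n, Gser (S (S n)) + (rho ^ 2 + rho ^ 3) * Gser (S n) + rho ^ 3 * Gser n = 0.
Proof.
  assert (H : (Gser + serC (rho ^ 2 + rho ^ 3) * (serX * Gser)
               + serC (rho ^ 3) * (serX * (serX * Gser)))%S = (ser1 - serC rho * serX)%S).
  { rewrite <- (Hser_sq_mulQ rho rho_root); unfold Gser, Qpoly; ring. }
  assert (HG0 : Gser O = 1).
  { pose proof (equal_f H O) as H0; unfold ser_add, ser_sub in H0.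
    rewrite !serC_mul_coef, !ser_mulX_0 in H0; simpl in H0; lra. }
  split; [exact HG0 | split].
  - pose proof (equal_f H 1%nat) as H1; unfold ser_add, ser_sub in H1.
    rewrite !serC_mul_coef, !ser_mulX_S, !ser_mulX_0, HG0 in H1; simpl in H1; lra.
  - intro n; pose proof (equal_f H (S (S n))) as H2; unfold ser_add, ser_sub in H2.
    rewrite !serC_mul_coef, !ser_mulX_S in H2; simpl in H2; lra.
Qed.

Lemma Gser_bound n : Rabs (Gser n) <= 18/10 * (23/100) ^ n.
Proof.
  destruct rho_bounds as [Hl Hu]; destruct Gser_coefs as [G0 [G1 GS]].
  assert (Ha : 0 <= rho ^ 2 + rho ^ 3 <= 1133/10000).
  { assert (rho ^ 2 <= (2957/10000) ^ 2) by (apply pow_incr; lra).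
    assert (rho ^ 3 <= (2957/10000) ^ 3) by (apply pow_incr; lra).
    pose proof (pow_le rho 2); pose proof (pow_le rho 3); lra. }
  assert (Hb : 0 <= rho ^ 3 <= 259/10000).
  { assert (rho ^ 3 <= (2957/10000) ^ 3) by (apply pow_incr; lra).
    pose proof (pow_le rho 3); lra. }
  revert n; enough (H : forall n, Rabs (Gser n) <= 18/10 * (23/100) ^ n /\
                    Rabs (Gser (S n)) <= 18/10 * (23/100) ^ (S n)) by apply H.
  induction n as [|n [IH1 IH2]].
  - rewrite G0, Rabs_R1, Rabs_left by lra; simpl; lra.
  - split; [exact IH2|].
    replace (Gser (S (S n))) with
      (- ((rho ^ 2 + rho ^ 3) * Gser (S n)) - rho ^ 3 * Gser n) by (specialize (GS n); lra).
    eapply Rle_trans; [apply Rabs_triang|]; rewrite !Rabs_Ropp, !Rabs_mult.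
    rewrite (Rabs_right (rho ^ 2 + rho ^ 3)), (Rabs_right (rho ^ 3)) by lra.
    pose proof (pow_le (23/100) n ltac:(lra)); simpl pow in *.
    assert ((rho ^ 2 + rho ^ 3) * Rabs (Gser (S n))
            <= 1133/10000 * (18/10 * (23/100 * (23/100) ^ n)))
      by (apply Rmult_le_compat; try lra; apply Rabs_pos).
    assert (rho * (rho * (rho * 1)) * Rabs (Gser n) <= 259/10000 * (18/10 * (23/100) ^ n))
      by (apply Rmult_le_compat; try lra; apply Rabs_pos).
    simpl in Ha; lra.
Qed.

Lemma Hser_bound n : Rabs (Hser rho n) <= (2/3) ^ n.
Proof. exact (ser_sqrt_coef_bound (Hser rho) (Hser_0 rho) Gser_bound n). Qed.

Lemma Series_Hser_neq0 : Series (Hser rho) <> 0.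
Proof.
  destruct (is_lim_seq_geom_dominated_sum _ Hser_bound) as [Habs _].
  assert (HH : is_series (Hser rho) (Series (Hser rho)))
    by (apply Series_correct, ex_series_Rabs, Habs).
  set (s := Series (Hser rho)).
  assert (HG : is_lim_seq (fun N => sum_f_R0 Gser N) (s * s)).
  { apply (is_lim_seq_ext (sum_n Gser)); [intro; apply sum_n_Reals|].
    exact (is_series_mult _ _ _ _ HH HH Habs Habs). }
  destruct Gser_coefs as [G0 [G1 GS]].
  set (a := rho ^ 2 + rho ^ 3); set (b := rho ^ 3).
  (* at [z = 1]: [H(1)^2 Q(1) = 1 - rho] with [Q(1) = 1 + a + b > 0] *)
  assert (Hrec : forall N, sum_f_R0 Gser (S (S N)) + a * sum_f_R0 Gser (S N)
                           + b * sum_f_R0 Gser N = 1 - rho).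
  { induction N as [|N IH]; simpl in *; [specialize (GS O); unfold a, b in *; nra|].
    specialize (GS (S N)); unfold a, b in *; lra. }
  assert (L : is_lim_seq (fun N => sum_f_R0 Gser (S (S N)) + a * sum_f_R0 Gser (S N)
                                   + b * sum_f_R0 Gser N) (s * s + a * (s * s) + b * (s * s))).
  { apply is_lim_seq_plus'; [apply is_lim_seq_plus'|].
    - apply (is_lim_seq_incr_1 (fun N => sum_f_R0 Gser (S N))),
        (is_lim_seq_incr_1 (fun N => sum_f_R0 Gser N)), HG.
    - apply (is_lim_seq_scal_l _ a (s * s)), (is_lim_seq_incr_1 (fun N => sum_f_R0 Gser N)), HG.
    - apply (is_lim_seq_scal_l _ b (s * s)), HG. }
  apply (is_lim_seq_ext _ (fun _ => 1 - rho)) in L; [|exact Hrec].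
  apply is_lim_seq_unique in L; rewrite Lim_seq_const in L; injection L as L.
  destruct rho_bounds; intro E; rewrite E in L; lra.
Qed.

Lemma is_lim_seq_Dinv_ratio : is_lim_seq (fun n => Dinv n / Dinv (S n)) rho.
Proof.
  (* [rho^n Dinv n / invsqrt n] tends to the nonzero constant [Series (Hser rho)] *)
  set (v := fun n => ser_rescale rho Dinv n / invsqrt n).
  assert (Hv : is_lim_seq v (Series (Hser rho))).
  { unfold v; rewrite (Dinv_rescale rho).
    apply is_lim_seq_ser_mul_invsqrt, Hser_bound. }
  assert (Hv1 : is_lim_seq (fun n => v (S n)) (Series (Hser rho)))
    by (apply (is_lim_seq_incr_1 v); exact Hv).
  pose proof Series_Hser_neq0 as Hne.
  assert (L : is_lim_seq (fun n => rho * (v n / v (S n)) * (invsqrt n / invsqrt (S n)))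
                (rho * (Series (Hser rho) / Series (Hser rho)) * 1)).
  { apply is_lim_seq_mult'; [|apply is_lim_seq_invsqrt_ratio].
    apply (is_lim_seq_scal_l _ rho (Series (Hser rho) / Series (Hser rho))).
    apply is_lim_seq_div'; auto. }
  replace (rho * (Series (Hser rho) / Series (Hser rho)) * 1) with rho in L by (field; auto).
  eapply is_lim_seq_ext; [|exact L]; intro n; unfold v, ser_rescale.
  pose proof (invsqrt_pos n); pose proof (invsqrt_pos (S n)).
  pose proof (Dinv_pos n); pose proof (Dinv_pos (S n)).
  assert (0 < rho ^ n) by (apply pow_lt; auto).
  cbn [pow]; field; repeat split; lra.
Qed.

End Singularity.

Theorem mainTheorem5 :
  forall rho : R, 0 < rho -> rho ^ 3 + rho ^ 2 + 3 * rho - 1 = 0 ->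
  forall m : nat, Un_cv (fun n => probX n m) ((1 - rho) * rho ^ m).
Proof.
  intros rho Hpos Hroot m; apply is_lim_seq_Reals.
  assert (Hratio := is_lim_seq_Dinv_ratio rho Hpos Hroot).
  assert (Hshift : is_lim_seq (fun n => Dinv n / Dinv (n + m)%nat) (rho ^ m))
    by exact (is_lim_seq_ratio_pow Dinv rho Dinv_pos Hratio m).
  assert (Hfrac : is_lim_seq (fun n => Dinv (n + m)%nat / sum_f_R0 Dinv (n + m)%nat) (1 - rho)).
  { apply (is_lim_seq_incr_n (fun n => Dinv n / sum_f_R0 Dinv n) m).
    apply is_lim_seq_ratio_partial_sum; [exact Dinv_pos | exact Hratio |].
    destruct (rho_bounds rho Hpos Hroot); lra. }
  apply (is_lim_seq_incr_n _ (S m)).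
  eapply is_lim_seq_ext; [|rewrite Rmult_comm; exact (is_lim_seq_mult' _ _ _ _ Hshift Hfrac)].
  intro n; rewrite probX_Dinv.
  pose proof (Dinv_pos (n + m)); pose proof (sum_f_R0_pos Dinv (n + m) Dinv_pos).
  field; lra.
Qed.
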